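(* Let $\mathcal{X} \subseteq \mathbb{R}^m$ be countable and let $\widehat\nu = \sum_{j=1}^N \widehat\nu_j \delta_{\widehat x_j}$ be a probability mass function supported on $N$ distinct points $\widehat x_1,\dots,\widehat x_N \in \mathcal{X}$ with $\widehat\nu_j > 0$ and $\sum_j \widehat\nu_j = 1$. For $\varepsilon \ge 0$ let $\mathbb{B}_{\mathrm{KL}}(\widehat\nu,\varepsilon) = \{\nu \in \mathcal{M}(\mathcal{X}) : \mathrm{KL}(\widehat\nu \parallel \nu) \le \varepsilon\}$. Then for any $\varepsilon \ge 0$ and $x \in \mathcal{X}$: (i) if $x \in \mathrm{supp}(\widehat\nu)$, then $$\sup_{\nu \in \mathbb{B}_{\mathrm{KL}}(\widehat\nu,\varepsilon)} \nu(x) = \max\Big\{ \sum_{j=1}^N y_j \mathbb{1}_x(\widehat x_j) : y \in \mathbb{R}^N_{++},\ \sum_{j=1}^N \widehat\nu_j \log(\widehat\nu_j / y_j) \le \varepsilon,\ e^\top y = 1 \Big\},$$ which is a finite convex optimization problem, where $e$ is the all-ones vector; (ii) if $x \notin \mathrm{supp}(\widehat\nu)$, then $\sup_{\nu \in \mathbb{B}_{\mathrm{KL}}(\widehat\nu,\varepsilon)} \nu(x) = 1 - \exp(-\varepsilon)$.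
   Context: $\mathcal{M}(\mathcal{X})$ is the set of probability mass functions supported on $\mathcal{X}$; $\delta_z$ is the Dirac measure at $z$; $\mathbb{R}^N_{++}$ is the set of vectors with strictly positive entries; $\mathbb{1}_x(\xi) = 1$ if $\xi = x$ and $0$ otherwise. For $\nu_1 \ll \nu_2$, $\mathrm{KL}(\nu_1 \parallel \nu_2) = \sum_{z \in \mathcal{X}} f(\nu_1(z)/\nu_2(z))\,\nu_2(z)$ with $f(t) = t\log t - t + 1$. *)

From HB Require Import structures.
From mathcomp Require Import all_boot all_order all_algebra.
From mathcomp Require Import all_classical all_reals all_analysis.
Set Implicit Arguments. Unset Strict Implicit. Unset Printing Implicit Defensive.
Import Order.TTheory GRing.Theory Num.Theory.
Local Open Scope classical_set_scope.
Local Open Scope ring_scope.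

Section Defs.
Variables (R : realType) (T : choiceType).

Definition fKL (t : R) : R := t * ln t - t + 1.

Definition is_pmf (S : set T) (nu : T -> R) : Prop :=
  (forall z, 0 <= nu z) /\ (forall z, ~ S z -> nu z = 0) /\
  (\esum_(z in S) (nu z)%:E = 1%E).

Definition KL (S : set T) (nu1 nu2 : T -> R) : \bar R :=
  if `[< forall z, S z -> nu2 z = 0 -> nu1 z = 0 >]
  then \esum_(z in S) (fKL (nu1 z / nu2 z) * nu2 z)%:E
  else +oo%E.

Definition KLball (S : set T) (nuh : T -> R) (eps : R) : set (T -> R) :=
  [set nu | is_pmf S nu /\ (KL S nuh nu <= eps%:E)%E].

End Defs.

Definition nuhat (R : realType) (T : eqType) (N : nat)
  (w : 'I_N -> R) (xh : 'I_N -> T) (z : T) : R :=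
  \sum_(j < N) w j * (xh j == z)%:R.

(* Every pmf in the KL ball charges each support point of nuhat, and its
   divergence from nuhat dominates the finite sum over the support (together
   with x when x lies off the support); conversely pmfs carried by these finitely
   many points are in the ball as soon as that finite sum is at most eps.
   (i) Renormalising a pmf of the ball on the support keeps it feasible for the
   finite program, since ln U <= U - 1.  By the log-sum inequality the objective
   of the program bounds the binary divergence binKL (w k) (y k), which is
   increasing on [w k, 1); hence the optimum is the s with binKL (w k) s = eps
   (intermediate value theorem), attained by moving mass to k while keeping the
   other weights proportional to w.
   (ii) With U the mass of nu on the support, the log-sum inequality gives
   eps >= - ln U + U - (1 - nu x) >= - ln (1 - nu x), and the mixture
   expR (- eps) * nuhat + (1 - expR (- eps)) * dirac x attains the bound. *)

From HB Require Import structures.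
From mathcomp Require Import all_boot all_order all_algebra.
From mathcomp Require Import all_classical all_reals all_analysis.
From mathcomp Require Import ring lra.

Set Implicit Arguments.
Unset Strict Implicit.
Unset Printing Implicit Defensive.
Import Order.TTheory GRing.Theory Num.Theory.
Import numFieldNormedType.Exports.
Local Open Scope classical_set_scope.
Local Open Scope ring_scope.

Section LnBounds.
Variable R : realType.
Implicit Types x y : R.

Lemma ln_ge1BV x : 0 < x -> 1 - x^-1 <= ln x.
Proof.
move=> x0; have := expR_ge1Dx (- ln x).
by rewrite expRN lnK ?posrE //; lra.
Qed.

Lemma ln_gt1BV x : 0 < x -> x != 1 -> 1 - x^-1 < ln x.
Proof.
move=> x0 x1; have : - ln x != 0 by rewrite oppr_eq0 ln_eq0.
by move/expR_gt1Dx; rewrite expRN lnK ?posrE //; lra.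
Qed.

Lemma mulr_ln_divff x : x * ln (x / x) = 0.
Proof. by have [->|x0] := eqVneq x 0; rewrite ?mul0r // divff // ln1 mulr0. Qed.

Lemma log_sum_ineq (I : finType) (P : pred I) (a b : I -> R) :
  (forall i, P i -> 0 < a i) -> (forall i, P i -> 0 < b i) ->
  (\sum_(i | P i) a i) * ln ((\sum_(i | P i) a i) / \sum_(i | P i) b i)
    <= \sum_(i | P i) a i * ln (a i / b i).
Proof.
set A := \sum_(i | P i) a i; set B := \sum_(i | P i) b i => a0 b0.
have [/existsP[j Pj]|/existsPn noP] := boolP [exists i, P i]; last first.
  by rewrite /A big_pred0 ?mul0r ?big_pred0 // => i; apply/negbTE/noP.
have sum_gt0 (F : I -> R) : (forall i, P i -> 0 < F i) -> 0 < \sum_(i | P i) F i.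
  move=> F0; rewrite (bigD1 j) //=; apply: ltr_pwDl (F0 j Pj) _.
  by apply: sumr_ge0 => i /andP[Pi _]; exact/ltW/F0.
have A0 : 0 < A by exact: sum_gt0.
have B0 : 0 < B by exact: sum_gt0.
have termwise i : P i ->
    a i * ln (A / B) + (a i - b i * (A / B)) <= a i * ln (a i / b i).
  move=> Pi; have ai := a0 i Pi; have bi := b0 i Pi.
  have := ln_ge1BV (divr_gt0 (divr_gt0 ai bi) (divr_gt0 A0 B0)).
  move/(ler_wpM2l (ltW ai)); rewrite [ln (_ / (A / B))]ln_div ?posrE ?divr_gt0 //.
  have -> : a i * (1 - (a i / b i / (A / B))^-1) = a i - b i * (A / B).
    by field; rewrite !gt_eqF.
  by rewrite mulrBr; lra.
have : \sum_(i | P i) (a i * ln (A / B) + (a i - b i * (A / B)))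
         <= \sum_(i | P i) a i * ln (a i / b i) by exact: ler_sum.
rewrite big_split /= -mulr_suml sumrB -mulr_suml -/A -/B.
by rewrite [B * _]mulrC divfK ?gt_eqF // subrr addr0.
Qed.

End LnBounds.

Section BinaryKL.
Variable R : realType.
Implicit Types p s : R.

Definition binKL p s : R := p * ln (p / s) + (1 - p) * ln ((1 - p) / (1 - s)).

Lemma binKLpp p : binKL p p = 0.
Proof. by rewrite /binKL !mulr_ln_divff addr0. Qed.

Lemma binKL_lt p s1 s2 : 0 < p -> p <= s1 -> s1 < s2 -> s2 < 1 ->
  binKL p s1 < binKL p s2.
Proof.
move=> p0 ps1 s12 s21.
have s1_gt0 : 0 < s1 by lra.
have s1_lt1 : 0 < 1 - s1 by lra.
have s2_lt1 : 0 < 1 - s2 by lra.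
have s2_gt0 : 0 < s2 by lra.
have ratio_ne1 : s1 / s2 != 1 by rewrite lt_eqF // ltr_pdivrMr ?mul1r.
have p_lt1 : 0 < 1 - p by lra.
have lnA : p * (1 - s2 / s1) < p * (ln s1 - ln s2).
  by rewrite ltr_pM2l // -ln_div ?posrE // -invf_div ln_gt1BV ?divr_gt0.
have lnB : (1 - p) * (1 - (1 - s2) / (1 - s1))
           <= (1 - p) * (ln (1 - s1) - ln (1 - s2)).
  by rewrite ler_pM2l // -ln_div ?posrE // -invf_div ln_ge1BV ?divr_gt0.
have slack : 0 <= p * (1 - s2 / s1) + (1 - p) * (1 - (1 - s2) / (1 - s1)).
  have -> : p * (1 - s2 / s1) + (1 - p) * (1 - (1 - s2) / (1 - s1))
            = (s2 - s1) * (s1 - p) / (s1 * (1 - s1)) by field; rewrite !gt_eqF.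
  by apply: divr_ge0; apply: mulr_ge0; lra.
rewrite /binKL !ln_div ?posrE //; lra.
Qed.

Lemma binKL_continuous p s : 0 < p < 1 -> 0 < s < 1 -> {for s, continuous (binKL p)}.
Proof.
move=> /andP[p0 p1] /andP[s0 s1].
have ln_div_cont (a : R) (f : R -> R) : 0 < a -> {for s, continuous f} -> 0 < f s ->
    {for s, continuous (fun t => ln (a / f t))}.
  move=> a0 fc fs; apply: (continuous_comp (f := fun t => a / f t)).
    by apply: cvgM; [exact: cvg_cst|apply: cvgV; rewrite ?gt_eqF].
  by apply: continuous_ln; rewrite divr_gt0.
apply: cvgD; apply: cvgM; try exact: cvg_cst.
  by apply: ln_div_cont => //; exact: cvg_id.
apply: ln_div_cont; [lra| |lra].
by apply: cvgB; [exact: cvg_cst|exact: cvg_id].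
Qed.

Lemma binKL_level p eps : 0 < p < 1 -> 0 <= eps ->
  exists2 s, p <= s < 1 & binKL p s = eps.
Proof.
move=> /andP[p0 p1] eps0.
have c0 : 0 < 1 - p by rewrite subr_gt0.
have plnp : p * ln p <= 0 by rewrite pmulr_rle0 // ln_le0 // ltW.
(* [b] is chosen so that the second summand of [binKL p b] equals [eps - p * ln p] *)
set E := expR (- ((eps - p * ln p) / (1 - p))).
have E0 : 0 < E := expR_gt0 _.
have E1 : E <= 1 by rewrite expR_le1 oppr_le0 divr_ge0 //; lra.
have cE0 : 0 < (1 - p) * E by rewrite mulr_gt0.
have cE_le : (1 - p) * E <= 1 - p by rewrite ger_pMr.
set b := 1 - (1 - p) * E.
have pb : p <= b by rewrite /b; lra.
have b1 : b < 1 by rewrite /b; lra.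
have eps_le : eps <= binKL p b.
  have lnb : ln b <= 0 by rewrite ln_le0 // ltW.
  rewrite /binKL (_ : 1 - b = (1 - p) * E); last by rewrite /b; ring.
  rewrite ln_div ?posrE ?(lt_le_trans p0) // invfM mulVKf ?gt_eqF //.
  rewrite lnV ?posrE // /E expRK.
  have -> : (1 - p) * - - ((eps - p * ln p) / (1 - p)) = eps - p * ln p.
    by field; rewrite gt_eqF.
  have : p * ln b <= 0 by rewrite pmulr_rle0.
  lra.
have mid : Num.min (binKL p p) (binKL p b) <= eps <= Num.max (binKL p p) (binKL p b).
  by rewrite binKLpp ge_min le_max eps0 eps_le orbT.
have cont : {within `[p, b], continuous (binKL p)}.
  apply: continuous_in_subspaceT => t; rewrite inE /= in_itv /= => /andP[pt tb].
  by apply: binKL_continuous; apply/andP; split; lra.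
have [s] := IVT pb cont mid; rewrite in_itv /= => /andP[ps sb] <-.
by exists s => //; rewrite ps /=; lra.
Qed.

End BinaryKL.

Section FiniteKL.
Variables (R : realType) (I : finType).
Implicit Types (w y : I -> R) (k : I).

Definition finKL w y : R := \sum_i w i * ln (w i / y i).

Definition KLfeasible w (eps : R) y : Prop :=
  [/\ forall i, 0 < y i, finKL w y <= eps & \sum_i y i = 1].

(* With [binKL (w k) s = eps], this is the maximiser of [y k] over the feasible set. *)
Definition tilt w k (s : R) (i : I) : R :=
  if i == k then s else w i * ((1 - s) / (1 - w k)).

Lemma sumr_neq_eq1 y k : \sum_i y i = 1 -> \sum_(i | i != k) y i = 1 - y k.
Proof. by move=> y1; rewrite -y1 [X in _ = X - _](bigD1 k) //= addrC addrK. Qed.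

Variable w : I -> R.
Hypothesis w_gt0 : forall i, 0 < w i.
Hypothesis w_sum1 : \sum_i w i = 1.

Lemma binKL_le_finKL y k : (forall i, 0 < y i) -> \sum_i y i = 1 ->
  binKL (w k) (y k) <= finKL w y.
Proof.
move=> y_gt0 y_sum1; rewrite /finKL (bigD1 k) //= lerD2l.
by rewrite -(sumr_neq_eq1 k w_sum1) -(sumr_neq_eq1 k y_sum1); apply: log_sum_ineq.
Qed.

Lemma KLfeasible_tilt k (s eps : R) : w k < 1 -> 0 < s < 1 -> binKL (w k) s <= eps ->
  KLfeasible w eps (tilt w k s).
Proof.
move=> wk1 /andP[s0 s1] le_eps.
have c0 : 0 < 1 - w k by rewrite subr_gt0.
have tilt_neq i : i != k -> tilt w k s i = w i * ((1 - s) / (1 - w k)).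
  by rewrite /tilt => /negbTE ->.
split.
- move=> i; rewrite /tilt; case: eqP => // _.
  by rewrite mulr_gt0 ?divr_gt0 // subr_gt0.
- rewrite /finKL (bigD1 k) //= {1}/tilt eqxx.
  rewrite (eq_bigr (fun i => w i * ln ((1 - w k) / (1 - s)))); last first.
    move=> i ik; rewrite tilt_neq //; congr (_ * ln _).
    by field; rewrite !gt_eqF ?subr_gt0.
  by rewrite -mulr_suml (sumr_neq_eq1 k w_sum1).
- rewrite (bigD1 k) //= {1}/tilt eqxx (eq_bigr _ tilt_neq) -mulr_suml.
  by rewrite (sumr_neq_eq1 k w_sum1) mulrCA divff ?mulr1 ?gt_eqF // addrC subrK.
Qed.

Lemma KLfeasible_argmax k (eps : R) : 0 <= eps ->
  exists2 y, KLfeasible w eps y & forall y', KLfeasible w eps y' -> y' k <= y k.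
Proof.
move=> eps0.
have le_sum y : (forall i, 0 < y i) -> y k <= \sum_i y i.
  by move=> y0; rewrite (bigD1 k) //= lerDl sumr_ge0 // => i _; exact/ltW.
have [wk_lt1|wk_ge1] := ltP (w k) 1; last first.
  exists w => [|y' [y'0 _ y'1]]; last by rewrite (le_trans (le_sum _ y'0)) // y'1.
  split=> //; rewrite /finKL big1 // => i _; exact: mulr_ln_divff.
have wk01 : 0 < w k < 1 by rewrite w_gt0.
have [s /andP[wks s1] Ks] := binKL_level wk01 eps0.
have s0 : 0 < s := lt_le_trans (w_gt0 k) wks.
exists (tilt w k s) => [|y' [y'0 y'K y'1]].
  by apply: KLfeasible_tilt; rewrite ?s0 ?Ks.
have [j /andP[jk _]] : exists j, (j != k) && (0 < w j).
  apply: psumr_neq0P => [i _|]; first exact/ltW.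
  by rewrite (sumr_neq_eq1 k w_sum1); apply/eqP; rewrite subr_eq0 eq_sym lt_eqF.
have y'k1 : y' k < 1.
  rewrite -subr_gt0 -(sumr_neq_eq1 k y'1) (bigD1 j) //=.
  by apply: ltr_pwDl (y'0 j) _; apply: sumr_ge0 => i _; exact/ltW.
rewrite /tilt eqxx leNgt; apply/negP => s_lt.
have := binKL_lt (w_gt0 k) wks s_lt y'k1.
by rewrite Ks ltNge (le_trans (binKL_le_finKL k y'0 y'1)).
Qed.

End FiniteKL.

Section EsumFiniteRange.
Variables (R : realType) (T : choiceType) (I : finType).
Variables (S : set T) (g : I -> T) (a : T -> \bar R).
Hypotheses (g_inj : injective g) (gS : forall i, S (g i)).
Hypothesis a_ge0 : forall z, S z -> (0 <= a z)%E.

Lemma esum_range : \esum_(z in range g) a z = (\sum_i a (g i))%E.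
Proof.
rewrite esum_image; last by move=> i j _ _; apply: g_inj.
rewrite esum_fset ?(fsbigE (enum I)) ?enum_uniq //; first last.
- by move=> i _; apply: a_ge0.
- exact: finite_finset.
- by move=> i _; rewrite mem_enum.
by rewrite big_enum_cond /=; apply: eq_bigl => i; rewrite in_setT.
Qed.

Lemma esum_split_range :
  \esum_(z in S) a z = (\sum_i a (g i) + \esum_(z in S `&` ~` range g) a z)%E.
Proof.
rewrite (esumID (range g)) // -esum_range; congr (esum _ _ + _)%E.
by apply/seteqP; split=> z; [case|move=> [i _ <-]; split => //; exists i].
Qed.

Lemma esum_ge_range : (\sum_i a (g i) <= \esum_(z in S) a z)%E.
Proof. by rewrite esum_split_range leeDl // esum_ge0 // => z [Sz _]; apply: a_ge0. Qed.

Lemma esum_eq_range : (forall z, S z -> ~ range g z -> a z = 0%E) ->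
  \esum_(z in S) a z = (\sum_i a (g i))%E.
Proof. by move=> a0; rewrite esum_split_range esum1 ?adde0 // => z [/a0]. Qed.

End EsumFiniteRange.

Section fKL.
Variable R : realType.

Lemma fKL0 : fKL 0 = 1 :> R.
Proof. by rewrite /fKL mul0r subr0 add0r. Qed.

Lemma fKL_ge0 (t : R) : 0 <= t -> 0 <= fKL t.
Proof.
rewrite le_eqVlt => /orP[/eqP <-|t0]; first by rewrite fKL0.
have := ler_wpM2l (ltW t0) (ln_ge1BV t0).
by rewrite mulrBr mulr1 mulfV ?gt_eqF // /fKL; lra.
Qed.

Lemma fKL_mul (a b : R) : 0 < b -> fKL (a / b) * b = a * ln (a / b) - a + b.
Proof.
by move=> b0; rewrite /fKL !mulrDl mulNr mul1r mulrAC divfK ?gt_eqF.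
Qed.

Lemma sum_fKL (I : finType) (a b : I -> R) : (forall i, 0 < b i) ->
  \sum_i fKL (a i / b i) * b i = finKL a b - \sum_i a i + \sum_i b i.
Proof.
by move=> b0; under eq_bigr => i _ do rewrite fKL_mul //; rewrite !big_split sumrN.
Qed.

End fKL.

Section KLballFiniteSupport.
Variables (R : realType) (T : choiceType) (X : set T) (mu : T -> R).
Hypothesis mu_ge0 : forall z, 0 <= mu z.
Implicit Types (nu : T -> R) (eps : R).

Lemma fKL_term_ge0 nu z : 0 <= nu z -> 0 <= fKL (mu z / nu z) * nu z.
Proof. by move=> nu0; rewrite mulr_ge0 ?fKL_ge0 ?divr_ge0. Qed.

Lemma KLball_abs_cont nu eps z : KLball X mu eps nu -> X z -> nu z = 0 -> mu z = 0.
Proof. by move=> [_]; rewrite /KL; case: asboolP => // + _; apply. Qed.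

Variables (I : finType) (g : I -> T).
Hypotheses (g_inj : injective g) (gX : forall i, X (g i)).

Lemma KLball_sum_le1 nu eps : KLball X mu eps nu -> \sum_i nu (g i) <= 1.
Proof.
move=> [[nu0 [_ nu1]] _]; rewrite -lee_fin -sumEFin -nu1.
by apply: esum_ge_range => // z _; rewrite lee_fin.
Qed.

Lemma KLball_sum_fKL_le nu eps : KLball X mu eps nu ->
  \sum_i fKL (mu (g i) / nu (g i)) * nu (g i) <= eps.
Proof.
move=> [[nu0 _]]; rewrite /KL; case: asboolP => // _ KLle.
rewrite -lee_fin -sumEFin (le_trans _ KLle) //.
by apply: esum_ge_range => // z _; rewrite lee_fin fKL_term_ge0.
Qed.

Lemma finite_support_KLball nu eps :
  (forall z, 0 <= nu z) -> (forall z, ~ range g z -> nu z = 0) ->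
  (forall z, nu z = 0 -> mu z = 0) -> \sum_i nu (g i) = 1 ->
  \sum_i fKL (mu (g i) / nu (g i)) * nu (g i) <= eps -> KLball X mu eps nu.
Proof.
move=> nu0 nu_out abs_cont nu1 KLle.
have gX' z : ~ X z -> ~ range g z by move=> nXz [i _ gi]; apply: nXz; rewrite -gi.
split; first split=> //; first split.
- by move=> z /gX'/nu_out.
- rewrite (esum_eq_range g_inj gX) ?sumEFin ?nu1 // => z _; first by rewrite lee_fin.
  by move/nu_out ->.
rewrite /KL asboolT; last by move=> z _ /abs_cont.
rewrite (esum_eq_range g_inj gX) ?sumEFin ?lee_fin // => z _.
  by rewrite lee_fin fKL_term_ge0.
by move/nu_out ->; rewrite mulr0.
Qed.

End KLballFiniteSupport.

Definition dirac_mix (R : realType) (T : eqType) (mu : T -> R) (q : R) (x z : T) : R :=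
  q * mu z + (1 - q) * (z == x)%:R.

Lemma big_option (R : Type) (idx : R) (op : Monoid.com_law idx) (I : finType)
    (F : option I -> R) :
  \big[op/idx]_(o : option I) F o = op (F None) (\big[op/idx]_(i : I) F (Some i)).
Proof.
rewrite (bigD1 None) //= (reindex_omap Some id) => [|[] //].
by congr (op _ _); apply: eq_bigl => i; rewrite eqxx.
Qed.

Section EmpiricalKLball.
Variables (R : realType) (T : choiceType) (X : set T) (N : nat).
Variables (w : 'I_N -> R) (xh : 'I_N -> T).
Hypotheses (xh_inj : injective xh) (xhX : forall j, X (xh j)).
Hypotheses (w_gt0 : forall j, 0 < w j) (w_sum1 : \sum_j w j = 1).
Implicit Types (nu : T -> R) (eps : R).

Lemma nuhat_xh (v : 'I_N -> R) j : nuhat v xh (xh j) = v j.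
Proof.
rewrite /nuhat (bigD1 j) //= eqxx mulr1 big1 ?addr0 // => i ij.
by rewrite (inj_eq xh_inj) (negbTE ij) mulr0.
Qed.

Lemma nuhat_out (v : 'I_N -> R) z : ~ range xh z -> nuhat v xh z = 0.
Proof.
move=> nz; rewrite /nuhat big1 // => i _.
by case: eqP => [xi|]; [case: nz; exists i|rewrite mulr0].
Qed.

Lemma nuhat_ge0 (v : 'I_N -> R) z : (forall j, 0 <= v j) -> 0 <= nuhat v xh z.
Proof. by move=> v0; apply: sumr_ge0 => i _; rewrite mulr_ge0. Qed.

Local Notation nuh := (nuhat w xh).

Lemma nuh_ge0 z : 0 <= nuh z.
Proof. by apply: nuhat_ge0 => j; exact/ltW. Qed.

Lemma KLball_gt0 nu eps j : KLball X nuh eps nu -> 0 < nu (xh j).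
Proof.
move=> B; have [[nu0 _] _] := B; rewrite lt_def nu0 andbT; apply/eqP => nu_eq0.
have := KLball_abs_cont B (xhX j) nu_eq0.
by rewrite nuhat_xh; apply/eqP; rewrite gt_eqF.
Qed.

Lemma KLball_mass_gt0 nu eps : KLball X nuh eps nu -> 0 < \sum_j nu (xh j).
Proof.
move=> B; have [j _] : exists j, true && (0 < w j).
  by apply: psumr_neq0P => [j _|]; [exact/ltW|rewrite w_sum1 => /eqP; rewrite oner_eq0].
rewrite (bigD1 j) //=; apply: ltr_pwDl (KLball_gt0 j B) _.
by apply: sumr_ge0 => i _; exact/ltW/(KLball_gt0 i B).
Qed.

Lemma nuhat_KLball y eps : KLfeasible w eps y -> KLball X nuh eps (nuhat y xh).
Proof.
move=> [y0 yK y1].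
apply: (finite_support_KLball nuh_ge0 xh_inj xhX) => [z|z|z||].
- by apply: nuhat_ge0 => j; exact/ltW.
- exact: nuhat_out.
- case: (pselect (range xh z)) => [[j _ <-]|/nuhat_out //].
  by rewrite nuhat_xh => yj0; have := y0 j; rewrite yj0 ltxx.
- by under eq_bigr do rewrite nuhat_xh.
by under eq_bigr do rewrite !nuhat_xh; rewrite sum_fKL // w_sum1 y1 subrK.
Qed.

Lemma KLball_normalize nu eps : KLball X nuh eps nu ->
  exists2 y, KLfeasible w eps y & forall j, nu (xh j) <= y j.
Proof.
move=> B; have nu_gt0 j := KLball_gt0 j B.
set U := \sum_j nu (xh j).
have U_gt0 : 0 < U := KLball_mass_gt0 B.
have U_le1 : U <= 1 := KLball_sum_le1 xh_inj xhX B.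
have := KLball_sum_fKL_le nuh_ge0 xh_inj xhX B.
under eq_bigr do rewrite nuhat_xh; rewrite sum_fKL // w_sum1 -/U => KLle.
have lnU : ln U <= U - 1.
  have Uinv_gt0 : 0 < U^-1 by rewrite invr_gt0.
  by have := ln_ge1BV Uinv_gt0; rewrite invrK lnV ?posrE //; lra.
exists (fun j => nu (xh j) / U) => [|j]; last first.
  by rewrite ler_pdivlMr // ler_piMr // ltW.
split=> [j||]; first by rewrite divr_gt0.
- rewrite /finKL (eq_bigr (fun j => w j * ln (w j / nu (xh j)) + w j * ln U)).
    by rewrite big_split /= -mulr_suml w_sum1 mul1r; rewrite /finKL in KLle; lra.
  move=> j _; rewrite -mulrDr; congr (_ * _).
  by rewrite -lnM ?posrE ?divr_gt0 //; congr ln; field; rewrite !gt_eqF.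
- by rewrite -mulr_suml -/U divff // gt_eqF.
Qed.

Variable x : T.
Hypotheses (Xx : X x) (x_out : ~ range xh x).

(* [oapp xh x] enumerates the support of nuhat together with x. *)
Lemma oapp_xh_inj : injective (oapp xh x).
Proof.
by move=> [i|] [j|] //= => [/xh_inj ->|e|e] //; case: x_out; [exists i|exists j].
Qed.

Lemma oapp_xhX o : X (oapp xh x o).
Proof. by case: o. Qed.

Lemma dirac_mix_KLball eps : 0 <= eps ->
  KLball X nuh eps (dirac_mix nuh (expR (- eps)) x).
Proof.
move=> eps0; set q := expR (- eps).
have q_gt0 : 0 < q := expR_gt0 _.
have q_le1 : q <= 1 by rewrite expR_le1 oppr_le0.
have mix_x : dirac_mix nuh q x x = 1 - q.
  by rewrite /dirac_mix nuhat_out // mulr0 add0r eqxx mulr1.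
have mix_xh j : dirac_mix nuh q x (xh j) = q * w j.
  rewrite /dirac_mix nuhat_xh; case: eqP => [xjx|_]; last by rewrite mulr0 addr0.
  by case: x_out; exists j.
have ln_ratio j : ln (w j / (q * w j)) = eps.
  by rewrite invfM mulrCA divff ?gt_eqF // mulr1 lnV ?posrE // expRK opprK.
apply: (finite_support_KLball nuh_ge0 oapp_xh_inj oapp_xhX) => [z|z z_out|z||].
- by rewrite /dirac_mix addr_ge0 ?mulr_ge0 ?nuh_ge0 ?subr_ge0 // ltW.
- have [zx|zx] := eqVneq z x; first by case: z_out; exists None.
  rewrite /dirac_mix nuhat_out ?(negbTE zx) ?mulr0 ?addr0 // => -[j _ xjz].
  by apply: z_out; exists (Some j).
- case: (pselect (range xh z)) => [[j _ <-]|/nuhat_out //].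
  by rewrite mix_xh => /eqP; rewrite mulf_eq0 !gt_eqF.
- rewrite big_option /= mix_x; under eq_bigr do rewrite mix_xh.
  by rewrite -mulr_sumr w_sum1 mulr1 subrK.
rewrite big_option /= mix_x nuhat_out // mul0r fKL0 mul1r.
under eq_bigr do rewrite mix_xh nuhat_xh fKL_mul ?mulr_gt0 // ln_ratio.
by rewrite !big_split /= sumrN -mulr_suml -mulr_sumr w_sum1; lra.
Qed.

Lemma KLball_le_offsupport nu eps : KLball X nuh eps nu -> nu x <= 1 - expR (- eps).
Proof.
move=> B; have nu_gt0 j := KLball_gt0 j B.
set U := \sum_j nu (xh j).
have U_gt0 : 0 < U := KLball_mass_gt0 B.
have mass : nu x + U <= 1.
  by have := KLball_sum_le1 oapp_xh_inj oapp_xhX B; rewrite big_option.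
have := KLball_sum_fKL_le nuh_ge0 oapp_xh_inj oapp_xhX B.
rewrite big_option /= nuhat_out // mul0r fKL0 mul1r.
under eq_bigr do rewrite nuhat_xh; rewrite sum_fKL // w_sum1 -/U => KLle.
have log_sum : - ln U <= finKL w (fun j => nu (xh j)).
  have := log_sum_ineq (P := predT) (fun j _ => w_gt0 j) (fun j _ => nu_gt0 j).
  by rewrite w_sum1 -/U mul1r div1r lnV ?posrE.
set v := 1 - nu x.
have v_gt0 : 0 < v by rewrite /v; lra.
have ln_vU : 1 - U / v <= ln v - ln U.
  by have := ln_ge1BV (divr_gt0 v_gt0 U_gt0); rewrite invf_div ln_div ?posrE.
have slack : v - U <= 1 - U / v.
  rewrite -subr_ge0 (_ : _ - _ = (v - U) * (1 - v) / v); last by field; rewrite gt_eqF.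
  have nux0 : 0 <= nu x by case: B => [[]].
  have vU : 0 <= v - U by rewrite /v; lra.
  have v_le1 : 0 <= 1 - v by rewrite /v; lra.
  by rewrite divr_ge0 ?mulr_ge0 // ltW.
have : expR (- eps) <= expR (ln v).
  by rewrite ler_expR; move: ln_vU slack; rewrite /v; lra.
by rewrite lnK ?posrE // /v; lra.
Qed.

End EmpiricalKLball.

Lemma sup_max (R : realType) (A : set R) (v : R) : A v -> ubound A v -> sup A = v.
Proof.
move=> Av ubv; apply/le_anti/andP; split; first by apply: ge_sup => //; exists v.
by apply: sup_upper_bound => //; split; exists v.
Qed.

Theorem mainTheorem3 (R : realType) (m : nat) (X : set 'rV[R]_m)
  (N : nat) (w : 'I_N -> R) (xh : 'I_N -> 'rV[R]_m) (eps : R) (x : 'rV[R]_m) :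
  countable X ->
  injective xh ->
  (forall j, X (xh j)) ->
  (forall j, 0 < w j) ->
  \sum_(j < N) w j = 1 ->
  0 <= eps ->
  X x ->
  ((exists j, xh j = x) ->
     exists y : 'I_N -> R,
       [/\ (forall j, 0 < y j),
           \sum_(j < N) w j * ln (w j / y j) <= eps,
           \sum_(j < N) y j = 1,
           sup [set nu x | nu in KLball X (nuhat w xh) eps]
             = \sum_(j < N) y j * (xh j == x)%:R &
           forall y' : 'I_N -> R,
             (forall j, 0 < y' j) ->
             \sum_(j < N) w j * ln (w j / y' j) <= eps ->
             \sum_(j < N) y' j = 1 ->
             \sum_(j < N) y' j * (xh j == x)%:R
               <= \sum_(j < N) y j * (xh j == x)%:R]) /\
  ((forall j, xh j != x) ->
     sup [set nu x | nu in KLball X (nuhat w xh) eps] = 1 - expR (- eps)).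
Proof.
move=> _ xh_inj xhX w_gt0 w_sum1 eps0 Xx; split.
  move=> [k <-].
  have at_k (v : 'I_N -> R) : \sum_(j < N) v j * (xh j == xh k)%:R = v k.
    exact: nuhat_xh.
  have [y [y_gt0 yK y1] y_max] := KLfeasible_argmax w_gt0 w_sum1 k eps0.
  exists y; rewrite !at_k; split=> // [|y' y'_gt0 y'K y'1]; last first.
    by rewrite at_k; exact: y_max.
  apply: sup_max => [|_ [nu B <-]].
    by exists (nuhat y xh); [exact: nuhat_KLball|rewrite nuhat_xh].
  have [y' y'F le_y'] := KLball_normalize xh_inj xhX w_gt0 w_sum1 B.
  exact: le_trans (le_y' k) (y_max y' y'F).
move=> x_notin; have x_out : ~ range xh x by move=> [j _ /eqP]; apply/negP.
apply: sup_max => [|_ [nu B <-]]; last first.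
  by apply: (KLball_le_offsupport xh_inj xhX w_gt0 w_sum1 Xx x_out).
exists (dirac_mix (nuhat w xh) (expR (- eps)) x); first exact: dirac_mix_KLball.
by rewrite /dirac_mix nuhat_out // mulr0 add0r eqxx mulr1.
Qed.
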